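(* Let $p,q,r$ be idempotents in a unital ring $A$ with $p\perp r$ and $q\perp r$. If $\operatorname{sr}(pAq)=1$ and $r\lesssim n\cdot p$ for some $n\in\mathbb N$, then $\operatorname{sr}((p+r)A(q+r))=1$.
   Context: Idempotents $e,f$ are orthogonal, $e\perp f$, if $ef=fe=0$. For idempotents $p,q$ in a unital ring $R$, $\operatorname{sr}(pRq)=1$ means: whenever $a\in pRq$, $x\in qRp$, $b\in pRp$ satisfy $ax+b=p$, there exist $y\in pRq$, $z\in qRp$ with $(a+by)z=p$. $A$ is identified with the upper left corner $e_{11}M_n(A)e_{11}$ of $M_n(A)$, and $n\cdot p=\mathrm{diag}(p,\dots,p)\in M_n(A)$. For idempotents $e,f$ in a ring $R$ (here $R=M_n(A)$), $e\lesssim f$ means there exist $a\in eRf$, $b\in fRe$ with $ab=e$. *)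

From mathcomp Require Import all_boot all_order all_algebra.
Set Implicit Arguments. Unset Strict Implicit. Unset Printing Implicit Defensive.
Import GRing.Theory.
Local Open Scope ring_scope.

Definition is_idem {R : pzRingType} (e : R) : Prop := e * e = e.

Definition orth {R : pzRingType} (e f : R) : Prop := e * f = 0 /\ f * e = 0.

Definition in_corner {R : pzRingType} (p q a : R) : Prop := exists t : R, a = p * t * q.

Definition sr_one {R : pzRingType} (p q : R) : Prop :=
  forall a x b : R,
    in_corner p q a -> in_corner q p x -> in_corner p p b ->
    a * x + b = p ->
    exists y z : R, in_corner p q y /\ in_corner q p z /\ (a + b * y) * z = p.

Definition lesssim {R : pzRingType} (e f : R) : Prop :=
  exists a b : R, in_corner e f a /\ in_corner f e b /\ a * b = e.

(* A identified with the upper-left corner e11 M_m(A) *)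
Definition corner_embed {A : pzRingType} (m : nat) (x : A) : 'M[A]_m.+1 :=
  \matrix_(i, j) (if (i == ord0) && (j == ord0) then x else 0).

Definition ndiag {A : pzRingType} (m : nat) (p : A) : 'M[A]_m.+1 := p%:M.

(* Put e = p + r and f = q + r. A relation a x + b = e in the corner eAf compresses to
   one in pAq; solving it there yields c in pAq and z in qAp with c z = p, and unipotent
   changes of variables then make a block diagonal, a = c + s with s in rA(q' + r), where
   q' = q - z c. So sr(eAf) = 1 follows from sr(pAq) = 1 and sr(rA(q' + r)) = 1 for all
   such q'. For the latter, work in M_(n+2)(A): there r is equivalent to a subidempotent
   of the sum P of n + 1 orthogonal copies of p, and sr(P M (P + q')) = 1 by induction on
   the number of copies, each step being the extension above (z c is equivalent to p).
   Finally sr = 1 passes to subidempotents and to equivalent idempotents. *)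

From mathcomp Require Import all_boot all_order all_algebra.

Set Implicit Arguments. Unset Strict Implicit. Unset Printing Implicit Defensive.
Import GRing.Theory.
Local Open Scope ring_scope.

Section Corners.
Variable R : pzRingType.
Implicit Types e f g a b c x y z t u : R.

(* For idempotent [e], [f] this is [in_corner e f a] (see [in_cornerP]), without a witness. *)
Definition mem_corner e f a := e * a = a /\ a * f = a.

Lemma mem_cornerl e f a : mem_corner e f a -> e * a = a. Proof. by case. Qed.
Lemma mem_cornerr e f a : mem_corner e f a -> a * f = a. Proof. by case. Qed.

Lemma mem_corner_id e : is_idem e -> mem_corner e e e.
Proof. by move=> He; split. Qed.

Lemma mem_corner0 e f : mem_corner e f 0.
Proof. by split; rewrite ?mulr0 ?mul0r. Qed.

Lemma mem_corner_mul e f g a b :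
  mem_corner e f a -> mem_corner f g b -> mem_corner e g (a * b).
Proof. by move=> [H1 H2] [H3 H4]; split; rewrite ?mulrA ?H1 // -mulrA H4. Qed.

Lemma mem_corner_add e f a b :
  mem_corner e f a -> mem_corner e f b -> mem_corner e f (a + b).
Proof. by move=> [H1 H2] [H3 H4]; split; rewrite ?mulrDr ?mulrDl ?H1 ?H2 ?H3 ?H4. Qed.

Lemma mem_corner_sub e f a b :
  mem_corner e f a -> mem_corner e f b -> mem_corner e f (a - b).
Proof.
move=> Ha [H1 H2]; apply: mem_corner_add Ha _.
by split; rewrite ?mulrN ?mulNr ?H1 ?H2.
Qed.

Lemma mem_corner_widen e f e' f' a :
  mem_corner e f a -> e' * e = e -> f * f' = f -> mem_corner e' f' a.
Proof. by move=> [H1 H2] He Hf; split; [rewrite -H1 mulrA He|rewrite -H2 -mulrA Hf]. Qed.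

Lemma mem_corner_sandwich e f t : is_idem e -> is_idem f -> mem_corner e f (e * t * f).
Proof. by move=> He Hf; split; rewrite ?mulrA ?He // -mulrA Hf. Qed.

Lemma in_cornerP e f a : is_idem e -> is_idem f -> in_corner e f a <-> mem_corner e f a.
Proof.
move=> He Hf; split; first by move=> [t ->]; apply: mem_corner_sandwich.
by move=> [H1 H2]; exists a; rewrite H1 H2.
Qed.

Lemma idem_add e f : is_idem e -> is_idem f -> orth e f -> is_idem (e + f).
Proof. by move=> He Hf [O1 O2]; rewrite /is_idem mulrDl !mulrDr He Hf O1 O2 addr0 add0r. Qed.

Lemma mem_corner_addl e y : is_idem e -> orth e y -> mem_corner (e + y) (e + y) e.
Proof. by move=> He [O1 O2]; rewrite /mem_corner mulrDl mulrDr He O1 O2 addr0. Qed.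

Lemma mem_corner_addr e y : is_idem y -> orth e y -> mem_corner (e + y) (e + y) y.
Proof. by move=> Hy [O1 O2]; rewrite /mem_corner mulrDl mulrDr Hy O1 O2 add0r. Qed.

Lemma orth_sub e g : is_idem e -> mem_corner e e g -> is_idem g -> orth g (e - g).
Proof.
by move=> He [eg ge] Hg; split; rewrite ?mulrBr ?mulrBl ?eg ?ge Hg subrr.
Qed.

Lemma idem_sub e g : is_idem e -> mem_corner e e g -> is_idem g -> is_idem (e - g).
Proof. by move=> He [eg ge] Hg; rewrite /is_idem mulrBl !mulrBr He eg ge Hg subrr subr0. Qed.

Lemma unipotent_inverse f N : is_idem f -> mem_corner f f N -> N * N = 0 ->
  (f + N) * (f - N) = f /\ (f - N) * (f + N) = f.
Proof.
move=> Hf [fN Nf] NN; split.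
  by rewrite mulrDl !mulrBr Hf fN Nf NN subr0 subrK.
by rewrite mulrBl !mulrDr Hf fN Nf NN addr0 addrK.
Qed.

Definition solvable e f a b :=
  exists y z, [/\ mem_corner e f y, mem_corner f e z & (a + b * y) * z = e].

Definition sr1 e f := forall a x b,
  mem_corner e f a -> mem_corner f e x -> mem_corner e e b -> a * x + b = e ->
  solvable e f a b.

Lemma sr_oneE e f : is_idem e -> is_idem f -> sr_one e f <-> sr1 e f.
Proof.
move=> He Hf; have cP a : in_corner e f a <-> mem_corner e f a := in_cornerP a He Hf.
have cP' a : in_corner f e a <-> mem_corner f e a := in_cornerP a Hf He.
have cPe a : in_corner e e a <-> mem_corner e e a := in_cornerP a He He.
split.
  move=> H a x b /cP Ha /cP' Hx /cPe Hb Hr.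
  have [y [z [/cP Hy [/cP' Hz E]]]] := H a x b Ha Hx Hb Hr.
  by exists y, z.
move=> H a x b /cP Ha /cP' Hx /cPe Hb Hr.
have [y [z [/cP Hy /cP' Hz E]]] := H a x b Ha Hx Hb Hr.
by exists y, z.
Qed.

Definition mvn_equiv e e' := exists w w',
  [/\ mem_corner e e' w, mem_corner e' e w', w * w' = e & w' * w = e'].

Lemma mvn_equiv_refl e : is_idem e -> mvn_equiv e e.
Proof. by move=> He; exists e, e. Qed.

Lemma mvn_equiv_sym e e' : mvn_equiv e e' -> mvn_equiv e' e.
Proof. by move=> [w [w' [H1 H2 H3 H4]]]; exists w', w. Qed.

Lemma mvn_equiv_trans e1 e2 e3 : mvn_equiv e1 e2 -> mvn_equiv e2 e3 -> mvn_equiv e1 e3.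
Proof.
move=> [w [w' [H1 H2 H3 H4]]] [v [v' [K1 K2 K3 K4]]].
exists (w * v), (v' * w'); split; [exact: mem_corner_mul H1 K1|exact: mem_corner_mul K2 H2| |].
  by rewrite -mulrA (mulrA v) K3 (mem_cornerl H2) H3.
by rewrite -mulrA (mulrA w') H4 (mem_cornerl K1) K4.
Qed.

Lemma mvn_equiv_idem e e' : mvn_equiv e e' -> is_idem e'.
Proof. by move=> [w [w' [H1 H2 H3 H4]]]; rewrite /is_idem -{1}H4 -mulrA (mem_cornerr H1). Qed.

Lemma mvn_equiv_mul e f a b :
  mem_corner e f a -> mem_corner f e b -> a * b = e -> mvn_equiv e (b * a).
Proof.
move=> Ha Hb ab; exists a, b; split => //.
  by split; [exact: mem_cornerl Ha|rewrite mulrA ab (mem_cornerl Ha)].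
by split; [rewrite -mulrA ab (mem_cornerr Hb)|exact: mem_cornerr Hb].
Qed.

Lemma mvn_equiv_add e1 e2 e1' e2' : orth e1 e2 -> orth e1' e2' ->
  mvn_equiv e1 e1' -> mvn_equiv e2 e2' -> mvn_equiv (e1 + e2) (e1' + e2').
Proof.
move=> [O1 O2] [O1' O2'] [w1 [w1' [[H1l H1r] [H2l H2r] H3 H4]]].
move=> [w2 [w2' [[K1l K1r] [K2l K2r] K3 K4]]].
have c1 : w1 * w2' = 0 by rewrite -H1r -K2l mulrA -(mulrA w1) O1' mulr0 mul0r.
have c2 : w2 * w1' = 0 by rewrite -K1r -H2l mulrA -(mulrA w2) O2' mulr0 mul0r.
have c3 : w1' * w2 = 0 by rewrite -H2r -K1l mulrA -(mulrA w1') O1 mulr0 mul0r.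
have c4 : w2' * w1 = 0 by rewrite -K2r -H1l mulrA -(mulrA w2') O2 mulr0 mul0r.
exists (w1 + w2), (w1' + w2'); split.
- split; rewrite !mulrDl !mulrDr.
    by rewrite H1l K1l -{2}H1l -{1}K1l !mulrA O1 O2 !mul0r addr0 add0r.
  by rewrite H1r K1r -{2}H1r -{1}K1r -!mulrA O1' O2' !mulr0 addr0 add0r.
- split; rewrite !mulrDl !mulrDr.
    by rewrite H2l K2l -{2}H2l -{1}K2l !mulrA O1' O2' !mul0r addr0 add0r.
  by rewrite H2r K2r -{2}H2r -{1}K2r -!mulrA O1 O2 !mulr0 addr0 add0r.
- by rewrite !mulrDl !mulrDr H3 K3 c1 c2 addr0 add0r.
- by rewrite !mulrDl !mulrDr H4 K4 c3 c4 addr0 add0r.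
Qed.

(* Conjugate the relation into [e, f], solve there and conjugate the solution back. *)
Lemma sr1_mvn_equiv e f e' f' : sr1 e f -> mvn_equiv e e' -> mvn_equiv f f' -> sr1 e' f'.
Proof.
move=> HS [w [w' [H1 H2 H3 H4]]] [v [v' [K1 K2 K3 K4]]] a x b Ha Hx Hb Hr.
have Ha0 : mem_corner e f (w * a * v') by apply: mem_corner_mul (mem_corner_mul H1 Ha) K2.
have Hx0 : mem_corner f e (v * x * w') by apply: mem_corner_mul (mem_corner_mul K1 Hx) H2.
have Hb0 : mem_corner e e (w * b * w') by apply: mem_corner_mul (mem_corner_mul H1 Hb) H2.
have Hr0 : w * a * v' * (v * x * w') + w * b * w' = e.
  rewrite -!mulrA (mulrA v') K4 (mulrA f') (mem_cornerl Hx) -mulrDr (mulrA a) -mulrDl.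
  by rewrite Hr (mem_cornerl H2) H3.
have [y [z [Hy Hz E]]] := HS _ _ _ Ha0 Hx0 Hb0 Hr0.
exists (w' * y * v), (v' * z * w).
split; [exact: mem_corner_mul (mem_corner_mul H2 Hy) K1|
        exact: mem_corner_mul (mem_corner_mul K2 Hz) H1|].
have -> : a + b * (w' * y * v) = w' * (w * a * v' + w * b * w' * y) * v.
  rewrite mulrDr mulrDl !mulrA H4 (mem_cornerl Ha) -!mulrA K4 (mem_cornerr Ha).
  by rewrite !mulrA (mem_cornerl Hb).
have Hsol := mem_cornerr (mem_corner_add Ha0 (mem_corner_mul Hb0 Hy)).
rewrite !mulrA -(mulrA _ v v') K3 -(mulrA w' _ f) Hsol -(mulrA w' _ z) E.
by rewrite (mem_cornerr H2) H4.
Qed.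

Lemma solvable_shift e f a b y0 :
  mem_corner e f y0 -> solvable e f (a + b * y0) b -> solvable e f a b.
Proof.
move=> H0 [y [z [Hy Hz E]]]; exists (y0 + y), z.
by split; [exact: mem_corner_add|exact: Hz|rewrite mulrDr addrA].
Qed.

Lemma solvable_mulr e f a b t :
  mem_corner e e t -> solvable e f a (b * t) -> solvable e f a b.
Proof.
move=> Ht [y [z [Hy Hz E]]]; exists (t * y), z.
by split; [exact: mem_corner_mul Ht Hy|exact: Hz|rewrite mulrA].
Qed.

Lemma solvable_unitr e f a b u u' : mem_corner f f u -> mem_corner f f u' -> u' * u = f ->
  solvable e f (a * u) b -> solvable e f a b.
Proof.
move=> Hu Hu' E1 [y [z [Hy Hz E]]]; exists (y * u'), (u * z).
split; [exact: mem_corner_mul Hy Hu'|exact: mem_corner_mul Hu Hz|].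
by rewrite mulrA mulrDl -!mulrA E1 (mem_cornerr Hy).
Qed.

Lemma solvable_conj e f a b U U' : mem_corner e e U -> mem_corner e e U' -> U' * U = e ->
  mem_corner e f a -> mem_corner e e b ->
  solvable e f (U * a) (U * b * U') -> solvable e f a b.
Proof.
move=> HU HU' E1 Ha Hb [y [z [Hy Hz E]]]; exists (U' * y), (z * U).
split; [exact: mem_corner_mul HU' Hy|exact: mem_corner_mul Hz HU|].
have -> : a + b * (U' * y) = U' * (U * a + U * b * U' * y).
  by rewrite mulrDr !mulrA E1 (mem_cornerl Ha) (mem_cornerl Hb).
by rewrite mulrA -(mulrA U' _ z) E (mem_cornerr HU') E1.
Qed.

Lemma sr1_cancel_orth e f y : is_idem e -> is_idem f -> is_idem y -> orth e y -> orth f y ->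
  sr1 (e + y) (f + y) -> sr1 e f.
Proof.
move=> He Hf Hy [ey ye] [fy yf] HS a x b Ha Hx Hb Hr.
have [Le1 Le2] := mem_corner_addl He (conj ey ye).
have [Lf1 Lf2] := mem_corner_addl Hf (conj fy yf).
have [Ly1 Ly2] := mem_corner_addr Hy (conj ey ye).
have [My1 My2] := mem_corner_addr Hy (conj fy yf).
have Hyy := mem_corner_id Hy.
have Ha' : mem_corner (e + y) (f + y) (a + y).
  by apply: mem_corner_add; [apply: mem_corner_widen Ha Le1 Lf2|
                             apply: mem_corner_widen Hyy Ly1 My2].
have Hx' : mem_corner (f + y) (e + y) (x + y).
  by apply: mem_corner_add; [apply: mem_corner_widen Hx Lf1 Le2|
                             apply: mem_corner_widen Hyy My1 Ly2].
have Hb' : mem_corner (e + y) (e + y) b by apply: mem_corner_widen Hb Le1 Le2.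
have ay : a * y = 0 by rewrite -(mem_cornerr Ha) -mulrA fy mulr0.
have ya : y * a = 0 by rewrite -(mem_cornerl Ha) mulrA ye mul0r.
have yx : y * x = 0 by rewrite -(mem_cornerl Hx) mulrA yf mul0r.
have yb : y * b = 0 by rewrite -(mem_cornerl Hb) mulrA ye mul0r.
have Hr' : (a + y) * (x + y) + b = e + y.
  by rewrite mulrDl !mulrDr ay yx Hy addr0 add0r -Hr addrAC.
have [Y [Z [HY HZ E]]] := HS _ _ _ Ha' Hx' Hb' Hr'.
exists (e * Y * f), (f * Z * e); split; try exact: mem_corner_sandwich.
have eE : (a + b * Y) * Z = e.
  have := congr1 (fun t => e * t) E; rewrite /= mulrA !mulrDr (mem_cornerl Ha).
  by rewrite ey !addr0 mulrA (mem_cornerl Hb) He.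
have yE : y * Z = y.
  have := congr1 (fun t => y * t) E; rewrite /= mulrA !mulrDr ya Hy mulrA yb.
  by rewrite mul0r add0r addr0 ye add0r.
have fE : (a + b * Y) * f * Z * e = e.
  have H0 : (a + b * Y) * ((f + y) * Z) * e = e by rewrite (mem_cornerl HZ) eE He.
  by rewrite (mulrDl f y Z) mulrDr yE mulrDl -(mulrA _ y e) ye mulr0 addr0 mulrA in H0.
have -> : a + b * (e * Y * f) = (a + b * Y) * f.
  by rewrite mulrDl (mem_cornerr Ha) !mulrA (mem_cornerr Hb).
by rewrite !mulrA -(mulrA _ f f) Hf.
Qed.

Lemma orth_subidem P g Q : mem_corner P P g -> orth P Q -> orth g Q.
Proof.
by move=> [Pg gP] [PQ QP]; split; [rewrite -gP -mulrA PQ mulr0|rewrite -Pg mulrA QP mul0r].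
Qed.

Lemma sr1_subidem P g Q : is_idem P -> is_idem g -> is_idem Q -> mem_corner P P g ->
  orth P Q -> sr1 P (P + Q) -> sr1 g (g + Q).
Proof.
move=> HP Hg HQ Hgc OPQ HS; have [PQ QP] := OPQ.
have [gQ Qg] := orth_subidem Hgc OPQ.
have Ogy := orth_sub HP Hgc Hg.
have OQy : orth Q (P - g) by split; rewrite ?mulrBr ?mulrBl ?QP ?PQ ?Qg ?gQ subrr.
have OgQy : orth (g + Q) (P - g).
  by split; [rewrite mulrDl Ogy.1 OQy.1 addr0|rewrite mulrDr Ogy.2 OQy.2 addr0].
apply: (sr1_cancel_orth Hg (idem_add Hg HQ (conj gQ Qg)) (idem_sub HP Hgc Hg) Ogy OgQy).
by rewrite addrAC [g + _]addrC subrK.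
Qed.

Lemma lesssim_subidem e f : is_idem e -> is_idem f -> lesssim e f ->
  exists g, [/\ is_idem g, mem_corner f f g & mvn_equiv e g].
Proof.
move=> He Hf [a [b [/(in_cornerP _ He Hf) Ha [/(in_cornerP _ Hf He) Hb ab]]]].
have Eg := mvn_equiv_mul Ha Hb ab.
by exists (b * a); split; [exact: mvn_equiv_idem Eg|exact: mem_corner_mul Hb Ha|].
Qed.

Lemma unimodular_complement p q c z : is_idem p -> is_idem q ->
  mem_corner p q c -> mem_corner q p z -> c * z = p ->
  [/\ mvn_equiv p (z * c), orth (z * c) (q - z * c), is_idem (q - z * c)
    & mem_corner q q (q - z * c)].
Proof.
move=> Hp Hq Hc Hz cz.
have Ed := mvn_equiv_mul Hc Hz cz; have Hd := mvn_equiv_idem Ed.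
have Hdq : mem_corner q q (z * c) by apply: mem_corner_mul Hz Hc.
split => //; [exact: orth_sub|exact: idem_sub|].
exact: mem_corner_sub (mem_corner_id Hq) Hdq.
Qed.

End Corners.

Section Extension.
Variable R : pzRingType.
Variables p q r : R.
Hypotheses (Hp : is_idem p) (Hq : is_idem q) (Hr : is_idem r).
Hypotheses (Opr : orth p r) (Oqr : orth q r).
Local Notation e := (p + r).
Local Notation f := (q + r).

Let pr : p * r = 0. Proof. exact: Opr.1. Qed.
Let qr : q * r = 0. Proof. exact: Oqr.1. Qed.
Let rq : r * q = 0. Proof. exact: Oqr.2. Qed.
Let He : is_idem e. Proof. exact: idem_add. Qed.
Let Hf : is_idem f. Proof. exact: idem_add. Qed.
Let ep : e * p = p. Proof. exact: (mem_corner_addl Hp Opr).1. Qed.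
Let pe : p * e = p. Proof. exact: (mem_corner_addl Hp Opr).2. Qed.
Let er : e * r = r. Proof. exact: (mem_corner_addr Hr Opr).1. Qed.
Let re : r * e = r. Proof. exact: (mem_corner_addr Hr Opr).2. Qed.
Let fq : f * q = q. Proof. exact: (mem_corner_addl Hq Oqr).1. Qed.
Let qf : q * f = q. Proof. exact: (mem_corner_addl Hq Oqr).2. Qed.
Let fr : f * r = r. Proof. exact: (mem_corner_addr Hr Oqr).1. Qed.
Let rf : r * f = r. Proof. exact: (mem_corner_addr Hr Oqr).2. Qed.

Section UnimodularTopRow.
Variables c z1 : R.
Hypotheses (Hc : mem_corner p q c) (Hz1 : mem_corner q p z1) (cz1 : c * z1 = p).
Local Notation d := (z1 * c).
Local Notation q' := (q - z1 * c).
Hypothesis HS : sr1 r (q' + r).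

Let Hd : mem_corner q q d. Proof. exact: mem_corner_mul Hz1 Hc. Qed.
Let dd : d * d = d. Proof. by rewrite mulrA -(mulrA z1 c z1) cz1 (mem_cornerr Hz1). Qed.
Let cd : c * d = c. Proof. by rewrite mulrA cz1 (mem_cornerl Hc). Qed.
Let dz1 : d * z1 = z1. Proof. by rewrite -mulrA cz1 (mem_cornerr Hz1). Qed.
Let q'z1 : q' * z1 = 0. Proof. by rewrite mulrBl (mem_cornerl Hz1) dz1 subrr. Qed.
Let cq' : c * q' = 0. Proof. by rewrite mulrBr (mem_cornerr Hc) cd subrr. Qed.
Let rz1 : r * z1 = 0. Proof. by rewrite -(mem_cornerl Hz1) mulrA rq mul0r. Qed.
Let z1r : z1 * r = 0. Proof. by rewrite -(mem_cornerr Hz1) -mulrA pr mulr0. Qed.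
Let q'rz1 : (q' + r) * z1 = 0. Proof. by rewrite mulrDl q'z1 rz1 addr0. Qed.
Let Hq' : mem_corner q q q'. Proof. exact: mem_corner_sub (mem_corner_id Hq) Hd. Qed.
Let q'r : q' * r = 0. Proof. by rewrite -(mem_cornerr Hq') -mulrA qr mulr0. Qed.
Let rq' : r * q' = 0. Proof. by rewrite -(mem_cornerl Hq') mulrA rq mul0r. Qed.
Let Hq'r : is_idem (q' + r).
Proof.
have Hq'i : is_idem q' := idem_sub Hq Hd (mvn_equiv_idem (mvn_equiv_mul Hc Hz1 cz1)).
by apply: idem_add => //; split.
Qed.
Let cr : c * r = 0. Proof. by rewrite -(mem_cornerr Hc) -mulrA qr mulr0. Qed.
Let q'rf : (q' + r) * f = q' + r.
Proof. by rewrite [_ * f]mulrDl [q' * f]mulrDr (mem_cornerr Hq') q'r rf addr0. Qed.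
Let fq'r : f * (q' + r) = q' + r.
Proof. by rewrite [f * _]mulrDr [f * q']mulrDl (mem_cornerl Hq') rq' fr addr0. Qed.

Lemma normal_form_split a : mem_corner e f a -> p * a = c -> r * a * d = 0 ->
  a = c + r * a /\ mem_corner r (q' + r) (r * a).
Proof.
move=> Ha pa rad; split; first by rewrite -pa -mulrDl (mem_cornerl Ha).
split; first by rewrite mulrA Hr.
by rewrite addrAC mulrBr -mulrA (mem_cornerr Ha) rad subr0.
Qed.

(* With [a = c + s] block diagonal, the [r]-block of the relation is solved in
   [sr1 r (q' + r)], and the two partial solutions are glued together. *)
Lemma solvable_of_block_diag a x b s : mem_corner e f a -> mem_corner f e x -> mem_corner e e b ->
  a * x + b = e -> a = c + s -> mem_corner r (q' + r) s -> solvable e f a b.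
Proof.
move=> Ha Hx Hb Hrel acs Hs.
have az1 : a * z1 = p by rewrite acs mulrDl cz1 -(mem_cornerr Hs) -mulrA q'rz1 mulr0 addr0.
pose v0 := z1 * (p * b).
have pb : p * b = a * v0 by rewrite /v0 mulrA az1 mulrA Hp.
have Hx2 : mem_corner (q' + r) r ((q' + r) * x * r) by exact: mem_corner_sandwich.
have Hb2 : mem_corner r r (r * b * r) by exact: mem_corner_sandwich.
have rel2 : s * ((q' + r) * x * r) + r * b * r = r.
  have ra : r * a = s.
    by rewrite acs mulrDr (mem_cornerl Hs) -(mem_cornerl Hc) mulrA Opr.2 mul0r add0r.
  rewrite !mulrA (mem_cornerr Hs) -mulrDl -ra -(mulrA r a x) -mulrDr Hrel.
  by rewrite re Hr.
have [y2 [z2 [Hy2 Hz2 E2]]] := HS Hs Hx2 Hb2 rel2.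
have HY : mem_corner e f y2 by apply: mem_corner_widen Hy2 er q'rf.
have Hv0 : mem_corner f e v0.
  apply: mem_corner_mul (mem_corner_widen Hz1 fq Hp) (mem_corner_mul _ Hb).
  by split; rewrite ?Hp ?pe.
have Yv0 : y2 * v0 = 0.
  by rewrite /v0 -(mem_cornerr Hy2) -mulrA (mulrA (q' + r)) q'rz1 mul0r mulr0.
exists y2, ((f - v0 * y2) * (z1 + z2)); split => //.
  apply: mem_corner_mul; first exact: mem_corner_sub (mem_corner_id Hf) (mem_corner_mul Hv0 HY).
  by apply: mem_corner_add; [apply: mem_corner_widen Hz1 fq pe|apply: mem_corner_widen Hz2 fq'r re].
have Hab : mem_corner e f (a + b * y2) by apply: mem_corner_add Ha (mem_corner_mul Hb HY).
have bsplit : b * y2 = p * b * y2 + r * b * r * y2.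
  by rewrite -(mulrA _ r) (mem_cornerl Hy2) -mulrDl -mulrDl (mem_cornerl Hb).
have K1 : (a + b * y2) * (f - v0 * y2) = c + (s + r * b * r * y2).
  rewrite mulrBr (mem_cornerr Hab) (mulrDl a) -(mulrA b) (mulrA y2) Yv0 mul0r mulr0.
  by rewrite addr0 mulrA -pb bsplit acs (addrC (p * b * y2)) addrA addrK -addrA.
have Hsb : mem_corner r (q' + r) (s + r * b * r * y2).
  exact: mem_corner_add Hs (mem_corner_mul Hb2 Hy2).
have K2 : (c + (s + r * b * r * y2)) * (z1 + z2) = e.
  rewrite mulrDl !mulrDr cz1 E2 -(mem_cornerl Hz2) mulrA (mulrDr c) cq' cr addr0 mul0r.
  by rewrite addr0 -{1}(mem_cornerr Hsb) -mulrA q'rz1 mulr0 add0r.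
by rewrite mulrA K1 K2.
Qed.

(* Conjugating by the unipotent [e - M] clears the block [r a d]. *)
Lemma solvable_of_top_row a x b : mem_corner e f a -> mem_corner f e x -> mem_corner e e b ->
  a * x + b = e -> p * a = c -> solvable e f a b.
Proof.
move=> Ha Hx Hb Hrel pa.
pose M := r * a * q * z1.
have HM : mem_corner e e M.
  apply: mem_corner_widen er pe; split; first by rewrite /M !mulrA Hr.
  by rewrite /M -mulrA (mem_cornerr Hz1).
have MM : M * M = 0 by rewrite /M -!mulrA (mulrA z1 r) z1r mul0r !mulr0.
have [U'U UU'] := unipotent_inverse He HM MM.
have HU : mem_corner e e (e - M) by apply: mem_corner_sub (mem_corner_id He) HM.
have HU' : mem_corner e e (e + M) by apply: mem_corner_add (mem_corner_id He) HM.
apply: (solvable_conj HU HU' U'U Ha Hb).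
have Ha' := mem_corner_mul HU Ha.
have pa' : p * ((e - M) * a) = c.
  by rewrite mulrA mulrBr pe /M !mulrA pr !mul0r subr0 pa.
have rad' : r * ((e - M) * a) * d = 0.
  have z1a : z1 * a = d by rewrite -{1}(mem_cornerr Hz1) -mulrA pa.
  have rM : r * M = M by rewrite /M !mulrA Hr.
  have Mad : M * a * d = r * a * d.
    by rewrite /M -(mulrA _ z1 a) z1a -mulrA dd -(mulrA _ q d) (mem_cornerl Hd).
  by rewrite [r * _]mulrA mulrBr re rM !mulrBl Mad subrr.
have [acs Hs] := normal_form_split Ha' pa' rad'.
apply: (solvable_of_block_diag Ha' _ _ _ acs Hs).
- exact: mem_corner_mul Hx HU'.
- exact: mem_corner_mul (mem_corner_mul HU Hb) HU'.
- rewrite -mulrA (mulrA a) -(mulrA (e - M) b) -mulrDr -mulrDl Hrel.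
  by rewrite (mem_cornerl HU') UU'.
Qed.

(* Multiplying [a] on the right by the unipotent [f - N] clears the block [p a r]. *)
Lemma solvable_of_top_corner a x b : mem_corner e f a -> mem_corner f e x -> mem_corner e e b ->
  a * x + b = e -> p * a * q = c -> solvable e f a b.
Proof.
move=> Ha Hx Hb Hrel paq.
pose N := z1 * (p * a * r).
have HN : mem_corner f f N.
  exact: mem_corner_widen (mem_corner_mul Hz1 (mem_corner_sandwich a Hp Hr)) fq rf.
have NN : N * N = 0 by rewrite /N -!mulrA (mulrA r z1) rz1 mul0r !mulr0.
have [E1 E2] := unipotent_inverse Hf HN NN.
have Hu : mem_corner f f (f - N) by apply: mem_corner_sub (mem_corner_id Hf) HN.
have Hu' : mem_corner f f (f + N) by apply: mem_corner_add (mem_corner_id Hf) HN.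
apply: (solvable_unitr Hu Hu' E1).
have paz1 : p * a * z1 = p by rewrite -(mem_cornerl Hz1) mulrA paq cz1.
apply: solvable_of_top_row.
- exact: mem_corner_mul Ha Hu.
- exact: mem_corner_mul Hu' Hx.
- exact: Hb.
- by rewrite -mulrA (mulrA _ (f + N)) E2 (mem_cornerl Hx).
- rewrite mulrA mulrBr -mulrA (mem_cornerr Ha) /N !mulrA paz1 Hp.
  by rewrite -{1}(mem_cornerr Ha) mulrDr mulrDr !mulrA addrK.
Qed.

End UnimodularTopRow.

Lemma top_corner_relation a x b : mem_corner e f a -> a * x + b = e ->
  p * a * q * (q * x * p) + (p * b * p + p * (a * r * x) * p) = p.
Proof.
move=> Ha Hrel.
have -> : p * a * q * (q * x * p) = p * (a * q * x) * p.
  by rewrite !mulrA -(mulrA (p * a) q q) Hq.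
rewrite (addrC (p * b * p)) addrA -mulrDl -mulrDr -mulrDl -mulrDr.
by rewrite (mem_cornerr Ha) -mulrDl -mulrDr Hrel pe Hp.
Qed.

(* Compress the relation to the corner [p, q] and solve it there; the unipotent [f + w]
   then reduces to the case [p a q = c] with [c z1 = p]. *)
Lemma sr1_add_orth : sr1 p q ->
  (forall c z, mem_corner p q c -> mem_corner q p z -> c * z = p -> sr1 r (q - z * c + r)) ->
  sr1 e f.
Proof.
move=> Spq H a x b Ha Hx Hb Hrel.
pose a1 := p * a * q; pose b1 := p * b * p + p * (a * r * x) * p.
have Hb1 : mem_corner p p b1 by apply: mem_corner_add; exact: mem_corner_sandwich.
have [y1 [z1 [Hy1 Hz1 E1]]] := Spq _ _ _ (mem_corner_sandwich a Hp Hq)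
  (mem_corner_sandwich x Hq Hp) Hb1 (top_corner_relation Ha Hrel).
pose c := a1 + b1 * y1.
have Hc : mem_corner p q c.
  exact: mem_corner_add (mem_corner_sandwich a Hp Hq) (mem_corner_mul Hb1 Hy1).
have y1r : y1 * r = 0 by rewrite -(mem_cornerr Hy1) -mulrA qr mulr0.
pose w := r * x * p * y1.
have Hw : mem_corner f f w.
  apply: mem_corner_widen (_ : mem_corner r q w) fr qf; split; first by rewrite /w !mulrA Hr.
  by rewrite /w -mulrA (mem_cornerr Hy1).
have ww : w * w = 0 by rewrite /w -!mulrA (mulrA y1 r) y1r mul0r !mulr0.
have [Eu Eu'] := unipotent_inverse Hf Hw ww.
have Hy1e : mem_corner e f y1 by apply: mem_corner_widen Hy1 ep qf.
have Ht : mem_corner e e (e - y1 * x).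
  by apply: mem_corner_sub; [exact: mem_corner_id|exact: mem_corner_mul Hy1e Hx].
apply: (solvable_unitr (mem_corner_add (mem_corner_id Hf) Hw)
  (mem_corner_sub (mem_corner_id Hf) Hw) Eu').
apply: (solvable_shift Hy1e); apply: (solvable_mulr Ht).
apply: (solvable_of_top_corner Hc Hz1 E1 (H c z1 Hc Hz1 E1)).
- apply: mem_corner_add (mem_corner_mul Hb Hy1e).
  exact: mem_corner_mul Ha (mem_corner_add (mem_corner_id Hf) Hw).
- exact: mem_corner_mul (mem_corner_sub (mem_corner_id Hf) Hw) Hx.
- exact: mem_corner_mul Hb Ht.
- have y1w : y1 * w = 0 by rewrite /w !mulrA y1r !mul0r.
  have E : (a * (f + w) + b * y1) * (f - w) = a + b * y1.
    by rewrite mulrDl -mulrA Eu (mem_cornerr Ha) -mulrA mulrBr (mem_cornerr Hy1e) y1w subr0.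
  rewrite mulrA E mulrBr (mem_cornerr Hb) mulrDl.
  by rewrite mulrA -addrA (addrCA (b * y1 * x)) subrr addr0 Hrel.
- have fwq : (f + w) * q = q + w by rewrite mulrDl fq /w -mulrA (mem_cornerr Hy1).
  rewrite mulrDr mulrDl -!mulrA fwq (mem_cornerr Hy1) mulrDr mulrDr !mulrA.
  rewrite /c /a1 /b1 mulrDl /w !mulrA -(mulrA (p * b) p y1) (mem_cornerl Hy1).
  by rewrite -addrA (addrC (p * a * r * x * p * y1)) addrA.
Qed.

End Extension.

Section Copies.
Variable R : pzRingType.
Variable e0 : R.

Definition sr1_over_copies Q := forall x y, mvn_equiv e0 x -> mvn_equiv e0 y ->
  orth x Q -> orth y Q -> sr1 x (y + Q).

Lemma sr1_over_copies_of e d Q : is_idem Q -> mvn_equiv e0 e -> mvn_equiv e0 d ->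
  orth d Q -> sr1 e (d + Q) -> sr1_over_copies Q.
Proof.
move=> HQ Ee Ed OdQ HS x y Ex Ey _ OyQ.
apply: (sr1_mvn_equiv HS); first exact: mvn_equiv_trans (mvn_equiv_sym Ee) Ex.
exact: mvn_equiv_add OdQ OyQ (mvn_equiv_trans (mvn_equiv_sym Ed) Ey) (mvn_equiv_refl HQ).
Qed.

Variable pi : nat -> R.
Variable K : nat.
Hypothesis Epi : forall i, (i < K)%N -> mvn_equiv e0 (pi i).
Hypothesis Opi : forall i j, (i < K)%N -> (j < K)%N -> i != j -> pi i * pi j = 0.

Lemma orth_pi_sum k i : (k <= i)%N -> (i < K)%N -> orth (pi i) (\sum_(j < k) pi j).
Proof.
move=> ki iK; have jK j : (j < k)%N -> (j < K)%N.
  by move=> jk; exact: leq_trans (leq_trans jk ki) (ltnW iK).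
split; [rewrite mulr_sumr|rewrite mulr_suml]; apply: big1 => j _.
  by apply: Opi => //; [exact: jK|rewrite neq_ltn (leq_trans (ltn_ord j) ki) orbT].
by apply: Opi => //; [exact: jK|rewrite neq_ltn (leq_trans (ltn_ord j) ki)].
Qed.

Lemma idem_pi_sum k : (k <= K)%N -> is_idem (\sum_(i < k) pi i).
Proof.
elim: k => [|k IH] kK; first by rewrite /is_idem big_ord0 mulr0.
rewrite big_ord_recr /=; apply: idem_add; first exact: IH (ltnW kK).
  exact: mvn_equiv_idem (Epi kK).
by have [O1 O2] := orth_pi_sum (leqnn k) kK; split.
Qed.

(* Peel off the last copy with [sr1_add_orth]: the complements [pi k + Q - z c] it asks
   about are orthogonal to the remaining copies, so the induction hypothesis applies. *)
Lemma sr1_sum_copies k : (k <= K)%N -> forall Q, is_idem Q ->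
  (forall i, (i < k)%N -> orth (pi i) Q) -> sr1_over_copies Q ->
  sr1 (\sum_(i < k) pi i) (\sum_(i < k) pi i + Q).
Proof.
elim: k => [|k IH] kK Q HQ OQ HG.
  rewrite big_ord0 => a x b _ _ _ _; exists 0, 0.
  by split; [exact: mem_corner0|exact: mem_corner0|rewrite mulr0].
rewrite big_ord_recr /=.
set S := \sum_(i < k) pi i.
have EP := Epi kK; have HP := mvn_equiv_idem EP.
have [PS SP] := orth_pi_sum (leqnn k) kK.
have OPQ := OQ k (ltnSn k).
have HPQ : is_idem (pi k + Q) by apply: idem_add.
have SPQ : sr1 (pi k) (pi k + Q) by apply: HG.
have OPQS : orth (pi k + Q) S.
  split; [rewrite mulrDl PS add0r|rewrite mulrDr SP add0r];
    rewrite ?mulr_sumr ?mulr_suml big1 // => i _; by have [] := OQ i (ltnW (ltn_ord i)).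
have -> : S + pi k + Q = pi k + Q + S by rewrite [S + pi k]addrC -addrA [S + Q]addrC addrA.
rewrite addrC; apply: (sr1_add_orth HP HPQ (idem_pi_sum (ltnW kK)) (conj PS SP) OPQS SPQ).
move=> c z Hc Hz cz.
have [Ed Od Hq' Hq'c] := unimodular_complement HP HPQ Hc Hz cz.
rewrite [X in sr1 _ X]addrC; apply: (IH (ltnW kK) _ Hq').
  move=> i ik; have iK := ltn_trans ik kK; have [Hl Hr] := Hq'c.
  have iP : pi i * pi k = 0 by apply: Opi; rewrite // neq_ltn ik.
  have Pi : pi k * pi i = 0 by apply: Opi; rewrite // neq_ltn ik orbT.
  have [iQ Qi] := OQ i (ltnW ik).
  split; first by rewrite -Hl mulrA [pi i * _]mulrDr iP iQ addr0 mul0r.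
  by rewrite -Hr -mulrA [_ * pi i]mulrDl Pi Qi addr0 mulr0.
apply: (sr1_over_copies_of Hq' EP (mvn_equiv_trans EP Ed) Od).
by rewrite addrC subrK.
Qed.

End Copies.

Section Multiplicative.
Variables (R S : pzRingType) (phi : R -> S).
Hypothesis phiM : {morph phi : x y / x * y}.

Lemma idem_morph e : is_idem e -> is_idem (phi e).
Proof. by rewrite /is_idem -phiM => ->. Qed.

Lemma mem_corner_morph e f a : mem_corner e f a -> mem_corner (phi e) (phi f) (phi a).
Proof. by move=> [H1 H2]; split; rewrite -phiM ?H1 ?H2. Qed.

Lemma mvn_equiv_morph e e' : mvn_equiv e e' -> mvn_equiv (phi e) (phi e').
Proof.
move=> [w [w' [H1 H2 H3 H4]]]; exists (phi w), (phi w').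
by split; rewrite -?phiM ?H3 ?H4 //; exact: mem_corner_morph.
Qed.

End Multiplicative.

Section MatrixUnits.
Variables (A : pzRingType) (m : nat).
Implicit Types (i j k l : 'I_m.+1) (x y : A).

Definition elem i j x : 'M[A]_m.+1 := \matrix_(k, l) (if (k == i) && (l == j) then x else 0).

Lemma elem_mul i j j' k x y :
  elem i j x * elem j' k y = if j == j' then elem i k (x * y) else 0.
Proof.
apply/matrixP => a b; rewrite !mxE (bigD1 j) //= big1 ?addr0; last first.
  by move=> l /negbTE Hl; rewrite !mxE Hl andbF mul0r.
rewrite !mxE eqxx andbT; case: (eqVneq j j') => _ /=; rewrite mxE; last by rewrite mulr0.
by case: (a == i); case: (b == k); rewrite ?mulr0 ?mul0r.
Qed.

Lemma elemM i x y : elem i i (x * y) = elem i i x * elem i i y.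
Proof. by rewrite elem_mul eqxx. Qed.

Lemma elemD i j x y : elem i j (x + y) = elem i j x + elem i j y.
Proof. by apply/matrixP => a b; rewrite !mxE; case: (_ && _); rewrite ?addr0. Qed.

Lemma elem0 i j : elem i j 0 = 0.
Proof. by apply/matrixP => a b; rewrite !mxE; case: (_ && _). Qed.

Lemma elem_inj i j : injective (elem i j).
Proof. by move=> x y /matrixP /(_ i j); rewrite !mxE !eqxx. Qed.

Lemma elem_sandwich i x y (M : 'M[A]_m.+1) : elem i i x * M * elem i i y = elem i i (x * M i i * y).
Proof.
apply/matrixP => a b; rewrite !mxE (bigD1 i) //= big1 ?addr0; last first.
  by move=> l /negbTE Hl; rewrite [elem i i y l b]mxE Hl /= mulr0.
rewrite [elem i i y i b]mxE eqxx /= -mulmxE mxE (bigD1 i) //= big1 ?addr0; last first.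
  by move=> l /negbTE Hl; rewrite mxE Hl andbF mul0r.
rewrite mxE eqxx andbT.
by case: (a == i); case: (b == i); rewrite ?mulr0 ?mul0r.
Qed.

Lemma scalar_mx_sum_elem x : (x%:M : 'M[A]_m.+1) = \sum_i elem i i x.
Proof.
apply/matrixP => a b; rewrite summxE !mxE (bigD1 a) //= big1 ?addr0; last first.
  by move=> k /negbTE Hk; rewrite mxE eq_sym Hk.
by rewrite mxE eqxx /= eq_sym; case: (b == a).
Qed.

Lemma mvn_equiv_elem i j x : is_idem x -> mvn_equiv (elem i i x) (elem j j x).
Proof. by move=> Hx; exists (elem i j x), (elem j i x); rewrite /mem_corner !elem_mul !eqxx Hx. Qed.

Lemma mem_corner_elemP i e f M : is_idem e -> is_idem f ->
  mem_corner (elem i i e) (elem i i f) M ->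
  M = elem i i (e * M i i * f) /\ mem_corner e f (e * M i i * f).
Proof.
by move=> He Hf [H1 H2]; split; [rewrite -elem_sandwich H1 H2|exact: mem_corner_sandwich].
Qed.

Lemma sr1_elemE i e f : is_idem e -> is_idem f -> sr1 (elem i i e) (elem i i f) <-> sr1 e f.
Proof.
move=> He Hf; split=> HS a x b Ha Hx Hb Hr.
  have Hr' : elem i i a * elem i i x + elem i i b = elem i i e by rewrite -elemM -elemD Hr.
  have [Y [Z [HY HZ E]]] := HS _ _ _ (mem_corner_morph (elemM i) Ha)
    (mem_corner_morph (elemM i) Hx) (mem_corner_morph (elemM i) Hb) Hr'.
  have [EY Hy] := mem_corner_elemP He Hf HY; have [EZ Hz] := mem_corner_elemP Hf He HZ.
  exists (e * Y i i * f), (f * Z i i * e); split => //.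
  by apply: (@elem_inj i i); rewrite elemM elemD elemM -EY -EZ.
have [Ea Ha'] := mem_corner_elemP He Hf Ha; have [Ex Hx'] := mem_corner_elemP Hf He Hx.
have [Eb Hb'] := mem_corner_elemP He He Hb.
have Hr' : e * a i i * f * (f * x i i * e) + e * b i i * e = e.
  by apply: (@elem_inj i i); rewrite elemD elemM -Ea -Ex -Eb.
have [y [z [Hy Hz E]]] := HS _ _ _ Ha' Hx' Hb' Hr'.
exists (elem i i y), (elem i i z).
split; [exact: (mem_corner_morph (elemM i) Hy)|exact: (mem_corner_morph (elemM i) Hz)|].
by rewrite Ea Eb -!elemM -elemD -elemM E.
Qed.

End MatrixUnits.

Section Shift.
Variables (A : pzRingType) (n : nat).

(* [block_mx 0 0 0 M], written entrywise to land in ['M_n.+2]. *)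
Definition shift_mx (M : 'M[A]_n.+1) : 'M[A]_n.+2 :=
  \matrix_(i, j) match unlift ord0 i, unlift ord0 j with
                 | Some i', Some j' => M i' j' | _, _ => 0 end.

Lemma shift_mxM : {morph shift_mx : M M' / M * M'}.
Proof.
move=> M M'; apply/matrixP => a b; rewrite !mxE big_ord_recl !mxE unlift_none.
under eq_bigr => k _ do rewrite !mxE liftK.
case: (unliftP ord0 a) => [a' _|_]; case: (unliftP ord0 b) => [b' _|_];
  rewrite /= ?mul0r ?add0r ?mxE //.
- by rewrite big1 // => k _; rewrite mulr0.
- by rewrite big1 // => k _; rewrite mul0r.
- by rewrite big1 // => k _; rewrite mul0r.
Qed.

Lemma shift_mxD : {morph shift_mx : M M' / M + M'}.
Proof.
move=> M M'; apply/matrixP => a b; rewrite !mxE.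
by case: (unlift ord0 a) => [a'|]; case: (unlift ord0 b) => [b'|]; rewrite ?mxE ?addr0.
Qed.

Lemma shift_mx0 : shift_mx 0 = 0.
Proof.
apply/matrixP => a b; rewrite !mxE.
by case: (unlift ord0 a) => [a'|]; case: (unlift ord0 b) => [b'|]; rewrite ?mxE.
Qed.

Lemma shift_mx_elem i j x : shift_mx (elem i j x) = elem (lift ord0 i) (lift ord0 j) x.
Proof.
apply/matrixP => a b; rewrite !mxE.
case: (unliftP ord0 a) => [a'|] ->; case: (unliftP ord0 b) => [b'|] ->;
  rewrite ?liftK ?unlift_none /= ?mxE ?(inj_eq (@lift_inj _ ord0)) //.
by rewrite (negbTE (neq_lift _ _)) andbF.
Qed.

Lemma orth_shift_mx_elem0 M x : orth (shift_mx M) (elem ord0 ord0 x).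
Proof.
split; apply/matrixP => a b; rewrite !mxE big1 // => k _; rewrite !mxE.
all: case: (unliftP ord0 k) => [k' ->|->]; rewrite ?unlift_none ?[lift _ _ == _]eq_sym
  ?(negbTE (neq_lift _ _)) ?andbF ?mulr0 ?mul0r //.
by case: (unlift ord0 a); rewrite mul0r.
Qed.

Lemma shift_scalar_mx x : shift_mx x%:M = \sum_(i < n.+1) elem (inord i.+1) (inord i.+1) x.
Proof.
rewrite scalar_mx_sum_elem (big_morph shift_mx shift_mxD shift_mx0).
apply: eq_bigr => i _; rewrite shift_mx_elem.
by have -> : lift ord0 i = inord i.+1 :> 'I_n.+2 by apply: val_inj; rewrite /= inordK // ltnS.
Qed.

End Shift.

Section Amplification.
Variables (A : pzRingType) (n : nat).
Local Notation corner0 := (@elem A n.+1 ord0 ord0).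

Lemma sr1_shift_diag p d Q : is_idem p -> is_idem Q -> mvn_equiv p d -> orth d Q ->
  sr1 p (d + Q) -> sr1 (shift_mx p%:M) (shift_mx p%:M + corner0 Q).
Proof.
move=> Hp HQ Ed OdQ HS; rewrite shift_scalar_mx.
have HQ0 : is_idem (corner0 Q) := idem_morph (elemM _) HQ.
have HG : sr1_over_copies (corner0 p) (corner0 Q).
  apply: (sr1_over_copies_of HQ0 (mvn_equiv_refl (idem_morph (elemM _) Hp))
    (mvn_equiv_morph (elemM _) Ed)); first by split; rewrite -elemM ?(proj1 OdQ) ?(proj2 OdQ) elem0.
  by rewrite -elemD; apply/sr1_elemE => //; apply: idem_add (mvn_equiv_idem Ed) HQ OdQ.
pose pi i : 'M[A]_n.+2 := elem (inord i.+1) (inord i.+1) p.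
have inordS_eq i j : (i < n.+1)%N -> (j < n.+1)%N ->
    ((inord i.+1 : 'I_n.+2) == inord j.+1) = (i == j).
  by move=> Hi Hj; apply/eqP/eqP => [/(congr1 val)|->]; rewrite /= ?inordK // => -[].
apply: (sr1_sum_copies (e0 := corner0 p) (pi := pi) (K := n.+1)) => //.
- by move=> i _; exact: mvn_equiv_elem.
- by move=> i j Hi Hj Hij; rewrite elem_mul inordS_eq // (negbTE Hij).
- by move=> i Hi; split; rewrite elem_mul; case: eqP => // /(congr1 val); rewrite /= inordK.
Qed.

(* [r] is equivalent to a subidempotent of the [n.+1] copies of [p], which [shift_mx]
   moves off the index [0] carrying [r] and [Q]. *)
Lemma sr1_lesssim_copies (p d Q r : A) : is_idem p -> is_idem Q -> is_idem r ->
  mvn_equiv p d -> orth d Q -> orth Q r -> sr1 p (d + Q) ->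
  lesssim (corner_embed n r) (ndiag n p) -> sr1 r (Q + r).
Proof.
move=> Hp HQ Hr Ed OdQ [Qr rQ] HS Hrp.
have Hcr : is_idem (corner_embed n r) := idem_morph (elemM _) Hr.
have Hnd : is_idem (ndiag n p) by rewrite /is_idem /ndiag -mulmxE -scalar_mxM Hp.
have [g [Hg Hgc Eg]] := lesssim_subidem Hcr Hnd Hrp.
have HQ0 : is_idem (corner0 Q) := idem_morph (elemM _) HQ.
have shiftM := @shift_mxM A n.
have OPQ := orth_shift_mx_elem0 (ndiag n p) Q.
have Hsg := mem_corner_morph shiftM Hgc.
have Sg := sr1_subidem (idem_morph shiftM Hnd) (idem_morph shiftM Hg) HQ0 Hsg OPQ
  (sr1_shift_diag Hp HQ Ed OdQ HS).
have Egr : mvn_equiv (shift_mx g) (corner0 r).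
  apply: mvn_equiv_trans (mvn_equiv_sym (mvn_equiv_morph shiftM Eg)) _.
  by rewrite shift_mx_elem; exact: mvn_equiv_elem.
have Orq : orth (corner0 r) (corner0 Q) by split; rewrite -elemM ?rQ ?Qr elem0.
have := sr1_mvn_equiv Sg Egr
  (mvn_equiv_add (orth_subidem Hsg OPQ) Orq Egr (mvn_equiv_refl HQ0)).
by rewrite -elemD addrC => /sr1_elemE; apply => //; apply: idem_add.
Qed.

End Amplification.

Unset Implicit Arguments.

Theorem proposition6 (A : pzRingType) (p q r : A) :
  is_idem p -> is_idem q -> is_idem r ->
  orth p r -> orth q r ->
  sr_one p q ->
  (exists n : nat, lesssim (corner_embed n r) (ndiag n p)) ->
  sr_one (p + r) (q + r).
Proof.
move=> Hp Hq Hr Opr Oqr /(sr_oneE Hp Hq) Spq [n Hrp].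
apply/(sr_oneE (idem_add Hp Hr Opr) (idem_add Hq Hr Oqr)).
apply: (sr1_add_orth Hp Hq Hr Opr Oqr Spq) => c z Hc Hz cz.
have [Ed Od Hq' Hq'q] := unimodular_complement Hp Hq Hc Hz cz.
apply: (sr1_lesssim_copies Hp Hq' Hr Ed Od (orth_subidem Hq'q Oqr) _ Hrp).
by rewrite addrC subrK.
Qed.
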